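(* Let $R$ be a semisimple commutative ring, $M$ an $R$-module and $C$ an $R$-linear relation on $M$. The following are equivalent: (1) there exists a reduction $(X\mid\rho)$ of $(M,C)$ that meets in the radical; (2) $C^\sharp=C^\flat\oplus Y$ for some $R$-submodule $Y$ carrying an $R[T,T^{-1}]$-module structure (extending its $R$-module structure) such that, for $y,z\in Y$, $Ty=z$ if and only if $z\in Cy$.
   Context: An $R$-linear relation on $M$ is an $R$-submodule $C\subseteq M\oplus M$; $Cm=\{m':(m,m')\in C\}$, $C^{-1}=\{(y,x):(x,y)\in C\}$. $C''$ is the set of $m\in M$ for which there is $(m_n)_{n\in\mathbb{N}}$ in $M$ with $m_0=m$ and $m_{n+1}\in Cm_n$ for all $n$; $C'$ is the set of those $m$ for which such a sequence exists with $m_n=0$ for $n\gg0$; $C^\sharp=C''\cap(C^{-1})''$; $C^\flat=C''\cap(C^{-1})'+(C^{-1})''\cap C'$. A reduction of $(M,C)$ is a pair $(X\mid\rho)$ with $X$ an $R[T,T^{-1}]$-module and $\rho\colon X\to M$ $R$-linear such that $C^\sharp=C^\flat+\mathrm{im}(\rho)$ and $\rho(Tx)\in C\rho(x)$ for all $x\in X$; it meets in the radical if $\{x\in X:\rho(x)\in C^\flat\}=\mathrm{rad}(X)$, the radical of $X$ as an $R$-module. *)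

From mathcomp Require Import all_boot all_order all_algebra.
Set Implicit Arguments. Unset Strict Implicit. Unset Printing Implicit Defensive.
Import GRing.Theory.
Local Open Scope ring_scope.

Definition is_ideal (R : comPzRingType) (I : R -> Prop) : Prop :=
  I 0 /\ (forall a b, I a -> I b -> I (a + b)) /\ (forall r a, I a -> I (r * a)).

(* R is semisimple: R is semisimple as a module over itself, i.e. every
   ideal is a direct summand of R. *)
Definition semisimple_ring (R : comPzRingType) : Prop :=
  forall I : R -> Prop, is_ideal I ->
    exists J : R -> Prop, is_ideal J /\
      (forall r : R, exists a b, I a /\ J b /\ r = a + b) /\
      (forall r : R, I r -> J r -> r = 0).

Definition is_submod (R : pzRingType) (V : lmodType R) (S : V -> Prop) : Prop :=
  S 0 /\ (forall u v, S u -> S v -> S (u + v)) /\ (forall (r : R) v, S v -> S (r *: v)).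

Definition is_linrel (R : pzRingType) (M : lmodType R) (C : M -> M -> Prop) : Prop :=
  C 0 0 /\ (forall m1 m2 n1 n2, C m1 m2 -> C n1 n2 -> C (m1 + n1) (m2 + n2)) /\
  (forall (r : R) m1 m2, C m1 m2 -> C (r *: m1) (r *: m2)).

Section LinRel.
Variables (R : pzRingType) (M : lmodType R).
Implicit Types (C : M -> M -> Prop).

Definition rel_inv C : M -> M -> Prop := fun x y => C y x.

Definition rel_dd C (m : M) : Prop :=
  exists f : nat -> M, f 0%N = m /\ forall n, C (f n) (f n.+1).

Definition rel_d C (m : M) : Prop :=
  exists f : nat -> M, f 0%N = m /\ (forall n, C (f n) (f n.+1)) /\
    exists N, forall n, (N <= n)%N -> f n = 0.

Definition rel_sharp C (m : M) : Prop := rel_dd C m /\ rel_dd (rel_inv C) m.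

Definition rel_flat C (m : M) : Prop :=
  exists a b, (rel_dd C a /\ rel_d (rel_inv C) a) /\
              (rel_dd (rel_inv C) b /\ rel_d C b) /\ m = a + b.
End LinRel.

Definition maximal_submod (R : pzRingType) (V : lmodType R) (N : V -> Prop) : Prop :=
  is_submod N /\ (exists v, ~ N v) /\
  forall N' : V -> Prop, is_submod N' -> (forall v, N v -> N' v) ->
    (forall v, N' v -> N v) \/ (forall v, N' v).

Definition rad (R : pzRingType) (V : lmodType R) (v : V) : Prop :=
  forall N : V -> Prop, maximal_submod N -> N v.

(* An R[T,T^{-1}]-module is an R-module X together with an R-linear
   automorphism T (with inverse Tinv).  A reduction (X | rho) of (M, C). *)
Definition is_reduction (R : pzRingType) (M : lmodType R) (C : M -> M -> Prop)
    (X : lmodType R) (T Tinv : {linear X -> X}) (rho : {linear X -> M}) : Prop :=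
  cancel T Tinv /\ cancel Tinv T /\
  (forall m, rel_sharp C m <->
     exists a x, rel_flat C a /\ m = a + rho x) /\
  (forall x, C (rho x) (rho (T x))).

Definition meets_in_radical (R : pzRingType) (M : lmodType R) (C : M -> M -> Prop)
    (X : lmodType R) (rho : {linear X -> M}) : Prop :=
  forall x, rel_flat C (rho x) <-> rad x.

From Pilot Require Import Defs.
From HB Require Import structures.
From mathcomp Require Import all_boot all_order all_algebra.
From mathcomp Require Import boolp classical_sets.
Set Implicit Arguments. Unset Strict Implicit. Unset Printing Implicit Defensive.
Import GRing.Theory.
Local Open Scope ring_scope.

(* Over a semisimple ring every module has zero radical: for [x != 0], Zorn's lemma gives a
   submodule [N] maximal among those avoiding [x]; splitting off the ideal
   [{r | r w \in R x + N}] shows [N + R x] is everything, so [N] is a maximal submodule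
   missing [x].  Hence in a reduction meeting in the radical, [rho] is injective and
   [im rho] meets [C^flat] trivially; transporting [T] along [rho] gives the splitting.  The
   graph condition holds because [C y z] and [C y (T y)] give [C 0 (z - T y)], which together
   with [z - T y \in C''] puts [z - T y] into [C^flat].  Conversely [Y] itself, with [T]
   restricted to it, is a reduction meeting in the (zero) radical. *)

Section MaximalAvoiding.
Variables (R : pzRingType) (X : lmodType R).

Definition max_avoiding (x : X) (N : X -> Prop) : Prop :=
  [/\ is_submod N, ~ N x &
    forall N', is_submod N' -> (forall v, N v -> N' v) -> ~ N' x ->
      forall v, N' v -> N v].

Lemma max_avoiding_exists (x : X) : x <> 0 -> exists N, max_avoiding x N.
Proof.
move=> x_neq0.
(* [P] does not ask for [A 0]: the empty chain, with union [set0], must be admissible. *)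
pose P (A : set X) := [/\ forall u v, A u -> A v -> A (u + v),
  forall (r : R) v, A v -> A (r *: v) & ~ A x].
have [A [[AD AZ Ax] Amax]] : exists A, P A /\ forall B, (A `<` B)%classic -> ~ P B.
  apply: Zorn_bigcup => F FP Ftot; split.
  - move=> u v [B FB Bu] [B' FB' B'v].
    have [BB'|B'B] := Ftot B B' FB FB'.
      by have [B'D _ _] := FP B' FB'; exists B' => //; apply: B'D => //; exact: BB'.
    by have [BD _ _] := FP B FB; exists B => //; apply: BD => //; exact: B'B.
  - by move=> r v [B FB Bv]; have [_ BZ _] := FP B FB; exists B => //; apply: BZ.
  - by move=> [B FB Bx]; have [_ _ []] := FP B FB.
have maxA B : P B -> (forall v, A v -> B v) -> forall v, B v -> A v.
  move=> PB AB v Bv; apply: contrapT => Av; apply: (Amax B) PB.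
  by split => // /(_ v Bv).
have A0 : A 0.
  apply: (maxA (A `|` [set 0])%classic); last by right.
  - split.
    + move=> u v [Au|->] [Av|->]; rewrite ?addr0 ?add0r;
        by [left; apply: AD | left | left | right].
    + by move=> r v [Av|->]; [left; apply: AZ | right; apply: scaler0].
    + by case.
  - by move=> v Av; left.
by exists A; split => // N' [_ [N'D N'Z]] AN' N'x; apply: maxA.
Qed.
End MaximalAvoiding.

Lemma rad0 (R : pzRingType) (X : lmodType R) : Defs.rad (0 : X).
Proof. by move=> N [[N0 _] _]. Qed.

Section SemisimpleRadical.
Variables (R : comPzRingType) (hR : semisimple_ring R) (X : lmodType R).

Lemma max_avoiding_span (x : X) N : max_avoiding x N ->
  forall w, exists s n, N n /\ w = s *: x + n.
Proof.
move=> [[N0 [ND NZ]] Nx Nmax] w.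
pose L (r : R) := exists s n, N n /\ r *: w = s *: x + n.
have L_ideal : is_ideal L.
  split; first by exists 0, 0; rewrite !scale0r addr0.
  split.
  - move=> a b [s [n [Nn ha]]] [s' [n' [Nn' hb]]]; exists (s + s'), (n + n').
    by split; [exact: ND | rewrite !scalerDl ha hb addrACA].
  - move=> r a [s [n [Nn ha]]]; exists (r * s), (r *: n).
    by split; [exact: NZ | rewrite -scalerA ha scalerDr scalerA].
have [J [[J0 [JD JZ]] [decomp LJ0]]] := hR L_ideal.
pose N' (u : X) := exists r n, [/\ J r, N n & u = r *: w + n].
have N'_submod : is_submod N'.
  split; first by exists 0, 0; rewrite scale0r addr0.
  split.
  - move=> _ _ [r [n [Jr Nn ->]]] [r' [n' [Jr' Nn' ->]]].
    exists (r + r'), (n + n'); split; [exact: JD | exact: ND |].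
    by rewrite scalerDl addrACA.
  - move=> c _ [r [n [Jr Nn ->]]]; exists (c * r), (c *: n).
    by split; [exact: JZ | exact: NZ | rewrite scalerDr scalerA].
have N'x : ~ N' x.
  move=> [r [n [Jr Nn xE]]].
  have Lr : L r.
    by exists 1, (- n); split; [rewrite -scaleN1r; exact: NZ | rewrite xE scale1r addrK].
  by apply: Nx; rewrite xE (LJ0 r Lr Jr) scale0r add0r.
have NN' v : N v -> N' v by move=> Nv; exists 0, v; rewrite scale0r add0r; split.
have J_eq0 r : J r -> r = 0.
  move=> Jr; apply: (LJ0 r _ Jr); exists 0, (r *: w); rewrite scale0r add0r.
  split=> //; apply: (Nmax N' N'_submod NN' N'x).
  by exists r, 0; rewrite addr0; split.
have [a [b [[s [n [Nn aE]]] [Jb oneE]]]] := decomp 1.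
exists s, n; split=> //.
by rewrite -aE -{1}[w]scale1r oneE (J_eq0 b Jb) addr0.
Qed.

Lemma max_avoiding_maximal (x : X) N : max_avoiding x N -> maximal_submod N.
Proof.
move=> Nx_max; have [N_submod Nx Nmax] := Nx_max.
split=> //; split; first by exists x.
move=> N' N'_submod NN'; have [_ [N'D N'Z]] := N'_submod.
have [N'x|N'x] := pselect (N' x); last by left; exact: Nmax.
right=> w; have [s [n [Nn ->]]] := max_avoiding_span Nx_max w.
by apply: N'D; [exact: N'Z | exact: NN'].
Qed.

Lemma semisimple_radP (v : X) : Defs.rad v <-> v = 0.
Proof.
split=> [rad_v|->]; last exact: rad0.
apply: contrapT => /max_avoiding_exists [N Nv_max].
have [_ Nv _] := Nv_max; apply: Nv; apply: rad_v.
exact: max_avoiding_maximal Nv_max.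
Qed.
End SemisimpleRadical.

Section LinearRelation.
Variables (R : pzRingType) (M : lmodType R) (C : M -> M -> Prop) (hC : is_linrel C).

Lemma linrelB m1 m2 n1 n2 : C m1 m2 -> C n1 n2 -> C (m1 - n1) (m2 - n2).
Proof.
have [_ [CD CZ]] := hC; move=> Cm Cn.
by rewrite -!scaleN1r; apply: CD => //; apply: CZ.
Qed.

Lemma rel_chain0 (D : M -> M -> Prop) : D 0 0 -> rel_dd D 0 /\ rel_d D 0.
Proof. by move=> D00; split; exists (fun=> 0); do ?split=> //; exists 0%N. Qed.

Lemma rel_flat0 : rel_flat C 0.
Proof.
have [C00 _] := hC.
have [ddC dC] := rel_chain0 C00; have [ddCi dCi] := rel_chain0 (D := rel_inv C) C00.
by exists 0, 0; rewrite addr0.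
Qed.

(* The [C^{-1}]-chain [w, 0, 0, ...] puts [w] into [(C^{-1})']. *)
Lemma rel_flat_of_dd w : rel_dd C w -> C 0 w -> rel_flat C w.
Proof.
have [C00 _] := hC; move=> ddw C0w.
have [_ dC] := rel_chain0 C00; have [ddCi _] := rel_chain0 (D := rel_inv C) C00.
exists w, 0; rewrite addr0; split; last by [].
split=> //; exists (fun n => if n is 0%N then w else 0); split=> //.
by split; [case | exists 1%N; case].
Qed.

Lemma reduction_graph (X : lmodType R) (T Tinv : {linear X -> X})
    (rho : {linear X -> M}) :
  is_reduction C T Tinv rho -> (forall x, rel_flat C (rho x) -> x = 0) ->
  forall a b, C (rho a) (rho b) -> b = T a.
Proof.
move=> [_ [_ [sharpE rhoC]]] flat_rho a b Cab.
apply/eqP; rewrite -subr_eq0; apply/eqP/flat_rho/rel_flat_of_dd.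
- have [|] := (sharpE (rho (b - T a))).2; last by [].
  by exists 0, (b - T a); rewrite add0r; split=> //; exact: rel_flat0.
- by rewrite -(subrr (rho a)) linearB; apply: linrelB.
Qed.
End LinearRelation.

Lemma exists_left_inverse (A B : Type) (a0 : A) (f : A -> B) :
  injective f -> exists g : B -> A, cancel f g.
Proof.
move=> f_inj.
have /choice [g gK] : forall b, exists a, (exists a', f a' = b) -> f a = b.
  move=> b; have [[a <-]|nb] := pselect (exists a, f a = b); first by exists a.
  by exists a0 => /nb.
by exists g => a; apply: f_inj; apply: gK; exists a.
Qed.

Lemma pack_linear (R : pzRingType) (U V : lmodType R) (f : U -> V) :
  linear f -> exists g : {linear U -> V}, g =1 f.
Proof.
move=> f_lin.
by exists (HB.pack_for {linear U -> V} f (GRing.isLinear.Build R U V _ f f_lin)).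
Qed.

Section Submodule.
Variables (R : pzRingType) (M : lmodType R).

Lemma is_submod_range (X : lmodType R) (f : {linear X -> M}) :
  is_submod (fun m => exists x, m = f x).
Proof.
split; first by exists 0; rewrite linear0.
split; first by move=> _ _ [a ->] [b ->]; exists (a + b); rewrite linearD.
by move=> r _ [a ->]; exists (r *: a); rewrite linearZ.
Qed.

Record submod := Submod { submod_pred :> M -> Prop; submod_predP : is_submod submod_pred }.

Variable S : submod.

Definition submod_mem : {pred M} := fun m => `[< S m >].

Fact submod_mem_closed : submod_closed submod_mem.
Proof.
have [S0 [SD SZ]] := submod_predP S.
split; first exact/asboolP.
move=> r u v /asboolP Su /asboolP Sv; apply/asboolP.
by apply: SD; [exact: SZ | exact: Sv].
Qed.

HB.instance Definition _ := GRing.isSubmodClosed.Build R M submod_mem submod_mem_closed.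

Definition submod_type : Type := {m : M | m \in submod_mem}.
HB.instance Definition _ := [isSub of submod_type for @sval M _].
HB.instance Definition _ := [Choice of submod_type by <:].
HB.instance Definition _ := [SubChoice_isSubLmodule of submod_type by <:].

Lemma submod_valP (y : submod_type) : S (val y).
Proof. exact: asboolP (valP y). Qed.

Lemma submod_valE m : S m -> exists y : submod_type, val y = m.
Proof. by move=> /asboolP Sm; exists (Sub m Sm); rewrite SubK. Qed.

Lemma submod_restrict (f : M -> M) : (forall m, S m -> S (f m)) ->
  exists g : submod_type -> submod_type, forall y, val (g y) = f (val y).
Proof.
move=> fS.
have fSb (y : submod_type) : f (val y) \in submod_mem by apply/asboolP/fS/submod_valP.
by exists (fun y => Sub (f (val y)) (fSb y)) => y; rewrite SubK.
Qed.
End Submodule.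

Section ReductionSplitting.
Variables (R : comPzRingType) (hR : semisimple_ring R).
Variables (M : lmodType R) (C : M -> M -> Prop) (hC : is_linrel C).

Definition reduction_in_radical : Prop :=
  exists (X : lmodType R) (T Tinv : {linear X -> X}) (rho : {linear X -> M}),
    is_reduction C T Tinv rho /\ meets_in_radical C rho.

Definition sharp_splitting : Prop :=
  exists (Y : M -> Prop) (T Tinv : M -> M),
    is_submod Y /\
    (forall y, Y y -> Y (T y)) /\ (forall y, Y y -> Y (Tinv y)) /\
    (forall y z, Y y -> Y z -> T (y + z) = T y + T z) /\
    (forall (r : R) y, Y y -> T (r *: y) = r *: T y) /\
    (forall y, Y y -> Tinv (T y) = y) /\ (forall y, Y y -> T (Tinv y) = y) /\
    (forall m, rel_sharp C m <-> exists a y, rel_flat C a /\ Y y /\ m = a + y) /\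
    (forall m, rel_flat C m -> Y m -> m = 0) /\
    (forall y z, Y y -> Y z -> (T y = z <-> C y z)).

Lemma sharp_splitting_of_reduction : reduction_in_radical -> sharp_splitting.
Proof.
move=> [X [T [Tinv [rho [rho_red rho_rad]]]]].
have [TK [TinvK [sharpE rhoC]]] := rho_red.
have flat_rho x : rel_flat C (rho x) -> x = 0.
  by move/rho_rad/(semisimple_radP hR).
have rho_inj : injective rho.
  move=> a b eq_rho; apply/eqP; rewrite -subr_eq0; apply/eqP/flat_rho.
  by rewrite linearB eq_rho subrr; exact: rel_flat0.
have [rho' rhoK] := exists_left_inverse 0 rho_inj.
exists (fun m => exists x, m = rho x), (rho \o T \o rho'), (rho \o Tinv \o rho').
split; first exact: is_submod_range.
split; first by move=> y _; eexists.
split; first by move=> y _; eexists.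
split; first by move=> _ _ [a ->] [b ->]; rewrite /= -linearD !rhoK !linearD.
split; first by move=> r _ [a ->]; rewrite /= -linearZ !rhoK !linearZ.
split; first by move=> _ [a ->]; rewrite /= !rhoK TK.
split; first by move=> _ [a ->]; rewrite /= !rhoK TinvK.
split.
  move=> m; rewrite sharpE; split=> [[a [x [flat_a ->]]]|[a [_ [flat_a [[x ->] ->]]]]].
    by exists a, (rho x); do !split=> //; exists x.
  by exists a, x.
split; first by move=> m + [x mE]; rewrite mE => /flat_rho ->; rewrite linear0.
move=> _ _ [a ->] [b ->]; rewrite /= rhoK.
split=> [<-|Cab]; first exact: rhoC.
by rewrite (reduction_graph hC rho_red flat_rho Cab).
Qed.

Lemma reduction_of_sharp_splitting : sharp_splitting -> reduction_in_radical.
Proof.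
move=> [Y [T [Tinv [hY [YT [YTi [TD [TZ [TiT [TTi [sharpE [flatY TC]]]]]]]]]]]].
pose S := Submod hY.
have [t tE] := submod_restrict (S := S) YT; have [t' t'E] := submod_restrict (S := S) YTi.
have Yval (y : submod_type S) : Y (val y) := submod_valP y.
have t_lin : linear t.
  move=> r y z; apply: val_inj.
  have valDZ (u v : submod_type S) : val (r *: u + v) = r *: val u + val v.
    by rewrite linearP.
  by rewrite tE !valDZ !tE TD ?TZ //; apply: hY.2.2.
have [T' T'E] := pack_linear t_lin.
have T'K : cancel T' t' by move=> y; apply: val_inj; rewrite t'E T'E tE TiT.
have t'K : cancel t' T' by move=> y; apply: val_inj; rewrite T'E tE t'E TTi.
have [Tinv' Tinv'E] := pack_linear (can2_linear T'K t'K).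
exists (submod_type S), T', Tinv', val.
have flat_val (y : submod_type S) : rel_flat C (val y) <-> y = 0.
  split=> [flat_y|->]; last by have := rel_flat0 hC.
  by apply: val_inj; have := flatY _ flat_y (submod_valP y).
split; last by move=> y; rewrite flat_val semisimple_radP.
split; first by move=> y; rewrite Tinv'E T'K.
split; first by move=> y; rewrite Tinv'E t'K.
split.
  move=> m; rewrite sharpE; split=> [[a [y [flat_a [Yy ->]]]]|[a [y [flat_a ->]]]].
    by have [y' <-] := submod_valE (S := S) Yy; exists a, y'.
  by exists a, (val y); do !split=> //; exact: submod_valP.
move=> y /=; rewrite T'E; apply/(TC _ _ (Yval y) (Yval (t y))).
exact: esym (tE y).
Qed.
End ReductionSplitting.

Theorem proposition4p10 (R : comPzRingType) (hR : semisimple_ring R)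
    (M : lmodType R) (C : M -> M -> Prop) (hC : is_linrel C) :
  (exists (X : lmodType R) (T Tinv : {linear X -> X}) (rho : {linear X -> M}),
      is_reduction C T Tinv rho /\ meets_in_radical C rho)
  <->
  (exists (Y : M -> Prop) (T Tinv : M -> M),
      is_submod Y /\
      (* R[T,T^{-1}]-module structure on Y: an R-linear automorphism T of Y *)
      (forall y, Y y -> Y (T y)) /\ (forall y, Y y -> Y (Tinv y)) /\
      (forall y z, Y y -> Y z -> T (y + z) = T y + T z) /\
      (forall (r : R) y, Y y -> T (r *: y) = r *: T y) /\
      (forall y, Y y -> Tinv (T y) = y) /\ (forall y, Y y -> T (Tinv y) = y) /\
      (* C^sharp = C^flat (+) Y (internal direct sum) *)
      (forall m, rel_sharp C m <-> exists a y, rel_flat C a /\ Y y /\ m = a + y) /\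
      (forall m, rel_flat C m -> Y m -> m = 0) /\
      (* T y = z iff z ∈ C y *)
      (forall y z, Y y -> Y z -> (T y = z <-> C y z))).
Proof.
split; [exact: sharp_splitting_of_reduction | exact: reduction_of_sharp_splitting].
Qed.
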